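(* For every $r\ge0$, the tuple $(q_{r,n}1_n)_{n\ge0}$ is an element of the center $Z(\mathcal{NB}_t)$, i.e. $q_{r,m}1_m\circ f=f\circ q_{r,n}1_n$ for all $m,n\ge0$ and all $f\in\mathrm{Hom}_{\mathcal{NB}_t}(B^{\star n},B^{\star m})$.
   Context: Let $\Bbbk$ be a field of characteristic $\neq2$, $t\in\{0,1\}$, and let $\mathcal{NB}_t$ be the nil-Brauer category: the strict graded $\Bbbk$-linear monoidal category (tensor $\star$, unit $\mathbb1$, composition $\circ$) generated by an object $B$ and morphisms $x:B\to B$ (degree 2), $\tau:B\star B\to B\star B$ (degree $-2$), $\cap:B\star B\to\mathbb1$, $\cup:\mathbb1\to B\star B$ (degree 0), with relations ($1=1_B$): $\tau\circ\tau=0$; $(\tau\star1)\circ(1\star\tau)\circ(\tau\star1)=(1\star\tau)\circ(\tau\star1)\circ(1\star\tau)$; $\cap\circ\cup=t1_{\mathbb1}$; $(\cap\star1)\circ(1\star\cup)=1=(1\star\cap)\circ(\cup\star1)$; $\cap\circ\tau=0$; $(1\star\cap)\circ(\tau\star1)=(\cap\star1)\circ(1\star\tau)$; $(x\star1)\circ\tau-\tau\circ(1\star x)=1\star1-\cup\circ\cap$; $\cap\circ(1\star x)=-\cap\circ(x\star1)$. For a polynomial $g\in\Bbbk[x_1,\dots,x_n]$, $g1_n$ denotes the endomorphism of $B^{\star n}$ obtained by substituting $x_i\mapsto 1^{\star(i-1)}\star x\star1^{\star(n-i)}$ (these commute). The symmetric polynomials $q_{r,n}\in\Bbbk[x_1,\dots,x_n]^{S_n}$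 are defined by $\sum_{r\ge0}u^{-r}q_{r,n}=\prod_{i=1}^n\frac{u+x_i}{u-x_i}\in\Bbbk[x_1,\dots,x_n][\![u^{-1}]\!]$. The center of a category is the algebra of endomorphisms of its identity functor. *)

From HB Require Import structures.
From mathcomp Require Import all_boot all_order all_algebra.
From mathcomp Require Import mpoly.
Set Implicit Arguments. Unset Strict Implicit. Unset Printing Implicit Defensive.
Import GRing.Theory.
Local Open Scope ring_scope.

(* The nil-Brauer category NB_t, presented by generators and relations *)
(* as a strict K-linear monoidal category.  Objects are B^{*n}, n:nat  *)
(* (B^{*0} = 1).  Morphism expressions are untyped terms; [wt f n m]   *)
(* says f : B^{*n} -> B^{*m}; [nb_eq t n m f g] is the smallest        *)
(* congruence on well-typed terms n -> m containing the axioms of a    *)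
(* strict K-linear monoidal category and the defining relations.       *)
(* Hom(B^{*n},B^{*m}) = well-typed terms n -> m modulo nb_eq t n m.    *)

Section NB.
Variable K : fieldType.

Inductive nbtm : Type :=
| Id   of nat
| Gx
| Gtau
| Gcap
| Gcup
| Comp of nbtm & nbtm      (* Comp f g = f o g *)
| Tens of nbtm & nbtm
| Zero of nat & nat
| Add  of nbtm & nbtm
| Scal of K & nbtm.

Inductive wt : nbtm -> nat -> nat -> Prop :=
| wt_id n : wt (Id n) n n
| wt_x : wt Gx 1 1
| wt_tau : wt Gtau 2 2
| wt_cap : wt Gcap 2 0
| wt_cup : wt Gcup 0 2
| wt_comp f g n m p : wt g n m -> wt f m p -> wt (Comp f g) n p
| wt_tens f g n1 m1 n2 m2 n m :
    wt f n1 m1 -> wt g n2 m2 -> n = (n1 + n2)%N -> m = (m1 + m2)%N ->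
    wt (Tens f g) n m
| wt_zero n m : wt (Zero n m) n m
| wt_add f g n m : wt f n m -> wt g n m -> wt (Add f g) n m
| wt_scal c f n m : wt f n m -> wt (Scal c f) n m.

Definition tparam (t : bool) : K := if t then 1 else 0.

Definition Sub (f g : nbtm) := Add f (Scal (-1) g).

Inductive nb_eq (t : bool) : nat -> nat -> nbtm -> nbtm -> Prop :=
| eq_refl f n m : wt f n m -> nb_eq t n m f f
| eq_sym f g n m : nb_eq t n m f g -> nb_eq t n m g f
| eq_trans f g h n m : nb_eq t n m f g -> nb_eq t n m g h -> nb_eq t n m f h
| eq_comp f f' g g' n m p :
    nb_eq t m p f f' -> nb_eq t n m g g' -> nb_eq t n p (Comp f g) (Comp f' g')
| eq_tens f f' g g' n1 m1 n2 m2 :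
    nb_eq t n1 m1 f f' -> nb_eq t n2 m2 g g' ->
    nb_eq t (n1 + n2) (m1 + m2) (Tens f g) (Tens f' g')
| eq_add f f' g g' n m :
    nb_eq t n m f f' -> nb_eq t n m g g' -> nb_eq t n m (Add f g) (Add f' g')
| eq_scal c f f' n m : nb_eq t n m f f' -> nb_eq t n m (Scal c f) (Scal c f')
| eq_addA f g h n m : wt f n m -> wt g n m -> wt h n m ->
    nb_eq t n m (Add f (Add g h)) (Add (Add f g) h)
| eq_addC f g n m : wt f n m -> wt g n m -> nb_eq t n m (Add f g) (Add g f)
| eq_add0 f n m : wt f n m -> nb_eq t n m (Add f (Zero n m)) f
| eq_addN f n m : wt f n m -> nb_eq t n m (Add f (Scal (-1) f)) (Zero n m)
| eq_scal1 f n m : wt f n m -> nb_eq t n m (Scal 1 f) f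
| eq_scalA a b f n m : wt f n m -> nb_eq t n m (Scal a (Scal b f)) (Scal (a * b) f)
| eq_scalDr a f g n m : wt f n m -> wt g n m ->
    nb_eq t n m (Scal a (Add f g)) (Add (Scal a f) (Scal a g))
| eq_scalDl a b f n m : wt f n m ->
    nb_eq t n m (Scal (a + b) f) (Add (Scal a f) (Scal b f))
| eq_compA f g h n m p q : wt h n m -> wt g m p -> wt f p q ->
    nb_eq t n q (Comp f (Comp g h)) (Comp (Comp f g) h)
| eq_id_comp f n m : wt f n m -> nb_eq t n m (Comp (Id m) f) f
| eq_comp_id f n m : wt f n m -> nb_eq t n m (Comp f (Id n)) f
| eq_compDl f g h n m p : wt h n m -> wt f m p -> wt g m p ->
    nb_eq t n p (Comp (Add f g) h) (Add (Comp f h) (Comp g h))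
| eq_compDr f g h n m p : wt g n m -> wt h n m -> wt f m p ->
    nb_eq t n p (Comp f (Add g h)) (Add (Comp f g) (Comp f h))
| eq_compZl c f g n m p : wt g n m -> wt f m p ->
    nb_eq t n p (Comp (Scal c f) g) (Scal c (Comp f g))
| eq_compZr c f g n m p : wt g n m -> wt f m p ->
    nb_eq t n p (Comp f (Scal c g)) (Scal c (Comp f g))
| eq_tensA f g h n m : wt (Tens f (Tens g h)) n m ->
    nb_eq t n m (Tens f (Tens g h)) (Tens (Tens f g) h)
| eq_tens_unitl f n m : wt f n m -> nb_eq t n m (Tens (Id 0) f) f
| eq_tens_unitr f n m : wt f n m -> nb_eq t n m (Tens f (Id 0)) f
| eq_tens_id a b : nb_eq t (a + b) (a + b) (Tens (Id a) (Id b)) (Id (a + b))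
| eq_interchange f f' g g' n1 m1 p1 n2 m2 p2 :
    wt f' n1 m1 -> wt f m1 p1 -> wt g' n2 m2 -> wt g m2 p2 ->
    nb_eq t (n1 + n2) (p1 + p2)
      (Tens (Comp f f') (Comp g g')) (Comp (Tens f g) (Tens f' g'))
| eq_tensDl f g h n m : wt (Tens (Add f g) h) n m ->
    nb_eq t n m (Tens (Add f g) h) (Add (Tens f h) (Tens g h))
| eq_tensDr f g h n m : wt (Tens f (Add g h)) n m ->
    nb_eq t n m (Tens f (Add g h)) (Add (Tens f g) (Tens f h))
| eq_tensZl c f g n m : wt (Tens f g) n m ->
    nb_eq t n m (Tens (Scal c f) g) (Scal c (Tens f g))
| eq_tensZr c f g n m : wt (Tens f g) n m ->
    nb_eq t n m (Tens f (Scal c g)) (Scal c (Tens f g))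
| rel_tau2 : nb_eq t 2 2 (Comp Gtau Gtau) (Zero 2 2)
| rel_braid :
    nb_eq t 3 3
      (Comp (Tens Gtau (Id 1)) (Comp (Tens (Id 1) Gtau) (Tens Gtau (Id 1))))
      (Comp (Tens (Id 1) Gtau) (Comp (Tens Gtau (Id 1)) (Tens (Id 1) Gtau)))
| rel_bubble : nb_eq t 0 0 (Comp Gcap Gcup) (Scal (tparam t) (Id 0))
| rel_zigzag1 : nb_eq t 1 1 (Comp (Tens Gcap (Id 1)) (Tens (Id 1) Gcup)) (Id 1)
| rel_zigzag2 : nb_eq t 1 1 (Comp (Tens (Id 1) Gcap) (Tens Gcup (Id 1))) (Id 1)
| rel_cap_tau : nb_eq t 2 0 (Comp Gcap Gtau) (Zero 2 0)
| rel_pitchfork :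
    nb_eq t 3 1 (Comp (Tens (Id 1) Gcap) (Tens Gtau (Id 1)))
                (Comp (Tens Gcap (Id 1)) (Tens (Id 1) Gtau))
| rel_dot_slide :
    nb_eq t 2 2 (Sub (Comp (Tens Gx (Id 1)) Gtau) (Comp Gtau (Tens (Id 1) Gx)))
                (Sub (Tens (Id 1) (Id 1)) (Comp Gcup Gcap))
| rel_cap_dot :
    nb_eq t 2 0 (Comp Gcap (Tens (Id 1) Gx)) (Scal (-1) (Comp Gcap (Tens Gx (Id 1)))).

(* g 1_n for g in K[x_1..x_n]: x_i |-> 1^{*(i-1)} * x * 1^{*(n-i)}      *)
(* (indices here are 0-based: i : 'I_n).                               *)

Definition xi_tm (n : nat) (i : 'I_n) : nbtm :=
  Tens (Id i) (Tens Gx (Id (n - i.+1))).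

Definition xpow_tm (n : nat) (i : 'I_n) (k : nat) : nbtm :=
  iter k (Comp (xi_tm i)) (Id n).

Definition mono_tm (n : nat) (mu : 'X_{1..n}) : nbtm :=
  foldr Comp (Id n) [seq xpow_tm i (mu i) | i <- enum 'I_n].

Definition poly_tm (n : nat) (g : {mpoly K[n]}) : nbtm :=
  foldr Add (Zero n n) [seq Scal (g@_mu) (mono_tm mu) | mu <- msupp g].

(* q_{r,n}: sum_r u^{-r} q_{r,n} = prod_i (u+x_i)/(u-x_i), expanded in *)
(* z = u^{-1}:  (u+x)/(u-x) = (1 + x z) * (1 - x z)^{-1}.  Formal power *)
(* series in z are coefficient sequences nat -> A.                     *)

Definition ser_mul (A : ringType) (a b : nat -> A) : nat -> A :=
  fun k => \sum_(j < k.+1) a j * b (k - j)%N.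

Definition ser_one (A : ringType) : nat -> A := fun k => (k == 0%N)%:R.

Definition ser_lin (A : ringType) (x : A) : nat -> A :=
  fun k => if k == 0%N then 1 else if k == 1%N then x else 0.

Definition ser_geom (A : ringType) (x : A) : nat -> A := fun k => x ^+ k.

Definition gen_q (n : nat) : nat -> {mpoly K[n]} :=
  \big[@ser_mul _/@ser_one _]_(i < n)
     ser_mul (ser_lin 'X_i) (ser_geom 'X_i).

Definition q_poly (r n : nat) : {mpoly K[n]} := gen_q n r.

End NB.

(* By induction on terms, a family z_r(n) ∈ End(B^{*n}) is central as soon as it
   commutes with the generators x, tau, cap, cup and satisfies the coproduct rule
   z_r(a + b) = Σ_j z_j(a) ⊗ z_{r-j}(b).  For z_r(n) = q_{r,n} 1_n the coproduct
   rule is the multiplicativity of the generating function Π_i (u+x_i)/(u-x_i),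
   and commutation with x holds because polynomials in one dot commute.  On two
   strands put e1 = x1 + x2 and e2 = x1 x2: the generating function satisfies
   (1 - e1 z + e2 z^2) Q = 1 + e1 z + e2 z^2, so q_1 = 2 e1, q_2 = e1 q_1 and
   q_{r+2} = e1 q_{r+1} - e2 q_r.  The dot slide relations show that e1 commutes
   with tau and is killed by cap and cup, and that left multiplication by e2
   preserves these properties for endomorphisms commuting with the dots.  Hence
   every q_{r,2} with r > 0 has them, which is what is needed as q_{r,0} = 0. *)

From Pilot Require Import Defs.
From HB Require Import structures.
From mathcomp Require Import all_boot all_order all_algebra.
From mathcomp Require Import mpoly ssrcomplements.
From mathcomp Require Import boolp zify ring.
Import GRing.Theory.
Set Implicit Arguments. Unset Strict Implicit. Unset Printing Implicit Defensive.
Local Open Scope ring_scope.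
Local Open Scope quotient_scope.

(** * Power series and the polynomials q_{r,n} *)

Section PowerSeries.
Variable A : comNzRingType.
Implicit Types a b c : nat -> A.

Definition ser_trunc k a : {poly A} := \poly_(i < k.+1) a i.

Lemma ser_mul_trunc a b k : ser_mul a b k = (ser_trunc k a * ser_trunc k b)`_k.
Proof.
rewrite coefM /ser_mul; apply: eq_bigr => -[j /= lt_jk] _.
by rewrite !coef_poly lt_jk ltnS leq_subr.
Qed.

Lemma coefM_low (p p' q : {poly A}) k : (forall j, (j <= k)%N -> p`_j = p'`_j) ->
  (p * q)`_k = (p' * q)`_k /\ (q * p)`_k = (q * p')`_k.
Proof.
move=> pp'; rewrite !coefM; split; apply: eq_bigr => -[j /= lt_jk] _.
  by rewrite pp'.
by rewrite pp' // leq_subr.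
Qed.

Lemma coef_trunc_ser_mul a b k j : (j <= k)%N ->
  (ser_trunc k (ser_mul a b))`_j = (ser_trunc k a * ser_trunc k b)`_j.
Proof.
move=> le_jk; rewrite coef_poly ltnS le_jk coefM /ser_mul.
apply: eq_bigr => -[i /= lt_ij] _; rewrite !coef_poly !ltnS.
have -> : (i <= k)%N by lia.
by have -> : (j - i <= k)%N by lia.
Qed.

Lemma ser_mulA : associative (@ser_mul A).
Proof.
move=> a b c; apply: funext => k; rewrite !ser_mul_trunc.
have [-> _] := coefM_low (ser_trunc k c) (coef_trunc_ser_mul a b (k := k)).
have [_ ->] := coefM_low (ser_trunc k a) (coef_trunc_ser_mul b c (k := k)).
by rewrite mulrA.
Qed.

Lemma ser_mulC : commutative (@ser_mul A).
Proof. by move=> a b; apply: funext => k; rewrite !ser_mul_trunc mulrC. Qed.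

Lemma ser_mul1 : left_id (@ser_one A) (@ser_mul A).
Proof.
move=> a; apply: funext => k; rewrite /ser_mul big_ord_recl /ser_one /= mul1r subn0.
by rewrite big1 ?addr0 // => i _; rewrite mul0r.
Qed.

Lemma ser_mulr1 : right_id (@ser_one A) (@ser_mul A).
Proof. by move=> a; rewrite ser_mulC ser_mul1. Qed.

HB.instance Definition _ :=
  Monoid.isLaw.Build (nat -> A) (@ser_one A) (@ser_mul A) ser_mulA ser_mul1 ser_mulr1.
HB.instance Definition _ := SemiGroup.isCommutativeLaw.Build (nat -> A) (@ser_mul A) ser_mulC.

Lemma ser_mul_lin (u v : A) k : ser_mul (ser_lin u) (ser_lin v) k =
  if k == 0%N then 1 else if k == 1%N then u + v else if k == 2%N then u * v else 0.
Proof.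
rewrite /ser_mul /ser_lin; case: k => [|[|[|k]]] /=.
- by rewrite big_ord1 mulr1.
- by rewrite !big_ord_recl big_ord0 /= mul1r mulr1 addr0 addrC.
- by rewrite !big_ord_recl big_ord0 /= mul1r mul0r !addr0 add0r.
by rewrite big1 // => -[[|[|i]] /= lt_ik] _; rewrite ?mulr0 ?mul0r.
Qed.

Lemma ser_mul_geom_lin (u : A) : ser_mul (ser_geom u) (ser_lin (- u)) = @ser_one A.
Proof.
apply: funext => -[|k]; rewrite /ser_mul /ser_lin /ser_geom /ser_one.
  by rewrite big_ord1 mulr1.
rewrite !big_ord_recr /= subnn subSnn /= mulr1 mulrN -exprSr subrK.
by rewrite big1 // => -[i /= lt_ik] _; rewrite !ifN ?mulr0 //; lia.
Qed.

End PowerSeries.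

Section SeriesMap.
Variables (A B : comNzRingType) (f : {rmorphism A -> B}).

Lemma ser_map_mul a b : f \o ser_mul a b = ser_mul (f \o a) (f \o b).
Proof.
apply: funext => k; rewrite /= /ser_mul rmorph_sum.
by apply: eq_bigr => i _; rewrite rmorphM.
Qed.

Lemma ser_map_lin x : f \o ser_lin x = ser_lin (f x).
Proof.
apply: funext => k /=; rewrite /ser_lin.
by case: (k == 0%N); rewrite ?rmorph1 //; case: (k == 1%N); rewrite ?rmorph0.
Qed.

Lemma ser_map_geom x : f \o ser_geom x = ser_geom (f x).
Proof. by apply: funext => k /=; rewrite /ser_geom rmorphXn. Qed.

Lemma ser_map_prod n (F : 'I_n -> nat -> A) :
  f \o \big[@ser_mul A/@ser_one A]_(i < n) F i = \big[@ser_mul B/@ser_one B]_(i < n) (f \o F i).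
Proof.
apply: big_morph => [a b|]; first exact: ser_map_mul.
by apply: funext => k /=; rewrite /ser_one rmorph_nat.
Qed.

End SeriesMap.

Section QPolynomials.
Variable K : fieldType.
Local Notation G x := (ser_mul (ser_lin x) (ser_geom x)).

Lemma q_poly0 r : q_poly K r 0 = (r == 0%N)%:R.
Proof. by rewrite /q_poly /gen_q big_ord0. Qed.

Definition mshiftl a b : {rmorphism {mpoly K[a]} -> {mpoly K[a + b]}} :=
  mmap (@mpolyC (a + b) K) (fun i => 'X_(lshift b i)).
Definition mshiftr a b : {rmorphism {mpoly K[b]} -> {mpoly K[a + b]}} :=
  mmap (@mpolyC (a + b) K) (fun i => 'X_(rshift a i)).

Lemma gen_q_add a b :
  gen_q K (a + b) = ser_mul (mshiftl a b \o gen_q K a) (mshiftr a b \o gen_q K b).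
Proof.
rewrite /gen_q big_split_ord !ser_map_prod; congr ser_mul; apply: eq_bigr => i _.
  by rewrite ser_map_mul ser_map_lin ser_map_geom /= mmapX mmap1U.
by rewrite ser_map_mul ser_map_lin ser_map_geom /= mmapX mmap1U.
Qed.

Lemma q_poly_add a b r :
  q_poly K r (a + b) =
  \sum_(j < r.+1) mshiftl a b (q_poly K j a) * mshiftr a b (q_poly K (r - j) b).
Proof. by rewrite /q_poly gen_q_add. Qed.

Local Notation x0 := ('X_(0 : 'I_2) : {mpoly K[2]}).
Local Notation x1 := ('X_(1 : 'I_2) : {mpoly K[2]}).
Local Notation e1 := (x0 + x1).
Local Notation e2 := (x0 * x1).
Local Notation q r := (q_poly K r 2).

Lemma gen_q_lin : ser_mul (ser_mul (ser_lin (- x0)) (ser_lin (- x1))) (gen_q K 2) =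
  ser_mul (ser_lin x0) (ser_lin x1).
Proof.
have GK (x : {mpoly K[2]}) : ser_mul (ser_lin (- x)) (G x) = ser_lin x.
  by rewrite ser_mulC -ser_mulA ser_mul_geom_lin ser_mulr1.
by rewrite /gen_q !big_ord_recl big_ord0 ser_mulr1 Monoid.mulmACA /= !GK.
Qed.

Lemma gen_q2_coef r : \sum_(j < r.+1) ser_mul (ser_lin (- x0)) (ser_lin (- x1)) j * q (r - j) =
  ser_mul (ser_lin x0) (ser_lin x1) r.
Proof. by rewrite -gen_q_lin. Qed.

Lemma q2_0 : q 0 = 1.
Proof. by have := gen_q2_coef 0; rewrite big_ord1 !ser_mul_lin /= mul1r. Qed.

Lemma q2_1 : q 1 = e1 + e1.
Proof.
have := gen_q2_coef 1; rewrite !big_ord_recl big_ord0 !ser_mul_lin /= subn0 q2_0 => H.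
by apply/(addIr (- x0 - x1)); move: H; rewrite mul1r mulr1 !addr0 => ->; ring.
Qed.

Lemma q2_rec r : q r.+2 = e1 * q r.+1 - e2 * q r + (if r == 0%N then e2 else 0).
Proof.
have := gen_q2_coef r.+2; rewrite !big_ord_recl big1 => [|j _]; last first.
  by rewrite ser_mul_lin /= mul0r.
rewrite !ser_mul_lin /= /bump /= !subSS !subn0 mul1r addr0 !eqSS => H.
rewrite -[q r.+2](addrK ((- x0 - x1) * q r.+1 + - x0 * - x1 * q r)) H.
by case: (r == 0%N); ring.
Qed.

End QPolynomials.

(** * Morphisms of NB_t as classes of terms *)

Section Typing.
Variable K : fieldType.
Local Notation tm := (nbtm K).
Implicit Types f g h : tm.

Lemma wt_Comp_inv f g n p : wt (Comp f g) n p -> exists m, wt g n m /\ wt f m p.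
Proof. by inversion 1; subst; eauto. Qed.

Lemma wt_Tens_inv f g n m : wt (Tens f g) n m ->
  exists n1 m1 n2 m2, [/\ wt f n1 m1, wt g n2 m2, n = (n1 + n2)%N & m = (m1 + m2)%N].
Proof. by inversion 1; subst; do 4 eexists; split; eauto. Qed.

Lemma wt_Add_inv f g n m : wt (Add f g) n m -> wt f n m /\ wt g n m.
Proof. by inversion 1; subst; eauto. Qed.

Lemma wt_Scal_inv c f n m : wt (Scal c f) n m -> wt f n m.
Proof. by inversion 1; subst; eauto. Qed.

Lemma wt_Id_inv k n m : wt (Id K k) n m -> n = k /\ m = k.
Proof. by inversion 1. Qed.

Lemma wt_Zero_inv k l n m : wt (Zero K k l) n m -> n = k /\ m = l.
Proof. by inversion 1. Qed.

Lemma wt_uniq f n m n' m' : wt f n m -> wt f n' m' -> n = n' /\ m = m'.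
Proof.
move=> W; elim: W n' m' => {f n m}; try by move=> n' m' W; inversion W.
- by move=> n n' m' /wt_Id_inv[-> ->].
- move=> f g n m p _ IHg _ IHf n' m' /wt_Comp_inv[k [Wg Wf]].
  by have [-> ek] := IHg _ _ Wg; subst k; have [_ ->] := IHf _ _ Wf.
- move=> f g n1 m1 n2 m2 n m _ IHf _ IHg -> -> n' m'.
  case/wt_Tens_inv=> [a [b [c [d [Wf Wg -> ->]]]]].
  by have [-> ->] := IHf _ _ Wf; have [-> ->] := IHg _ _ Wg.
- by move=> n m n' m' /wt_Zero_inv[-> ->].
- by move=> f g n m _ IHf _ _ n' m' /wt_Add_inv[/IHf].
- by move=> c f n m _ IHf n' m' /wt_Scal_inv/IHf.
Qed.

End Typing.

Ltac wt_inv := repeat match goal with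
  | H : @wt _ (Comp _ _) _ _ |- _ => apply wt_Comp_inv in H; destruct H as [? [? ?]]
  | H : @wt _ (Tens _ _) _ _ |- _ =>
      apply wt_Tens_inv in H; destruct H as [? [? [? [? [? ? ? ?]]]]]; subst
  | H : @wt _ (Add _ _) _ _ |- _ => apply wt_Add_inv in H; destruct H as [? ?]
  | H : @wt _ (Scal _ _) _ _ |- _ => apply wt_Scal_inv in H
  | H : @wt _ (Defs.Id _ _) _ _ |- _ => apply wt_Id_inv in H; destruct H as [? ?]; subst
  | H : @wt _ (Defs.Zero _ _ _) _ _ |- _ =>
      apply wt_Zero_inv in H; destruct H as [? ?]; subst
  end.

Ltac wt_auto := repeat (match goal with
  | |- @wt _ (Comp _ _) _ _ => eapply wt_comp
  | |- @wt _ (Tens _ _) _ _ => eapply wt_tens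
  | |- @wt _ (Add _ _) _ _ => eapply wt_add
  | |- @wt _ (Scal _ _) _ _ => eapply wt_scal
  | |- @wt _ (Defs.Id _ _) _ _ => eapply wt_id
  | |- @wt _ (Defs.Zero _ _ _) _ _ => eapply wt_zero
  | |- @wt _ (Defs.Gx _) _ _ => eapply wt_x
  | |- @wt _ (Defs.Gtau _) _ _ => eapply wt_tau
  | |- @wt _ (Defs.Gcap _) _ _ => eapply wt_cap
  | |- @wt _ (Defs.Gcup _) _ _ => eapply wt_cup
  | |- _ = _ => first [reflexivity | lia]
  | H : @wt _ ?f _ _ |- @wt _ ?f _ _ => exact H
  end).

Ltac wt_unify := repeat match goal with
  | H1 : @wt _ ?f ?a ?b, H2 : @wt _ ?f ?c ?d |- _ =>
      let e1 := fresh "e" in let e2 := fresh "e" in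
      destruct (wt_uniq H1 H2) as [e1 e2]; clear H2; try subst
  | H : (?x + ?y)%N = (?z + ?y)%N |- _ => move/addIn: H => H; try subst
  | H : (?y + ?x)%N = (?y + ?z)%N |- _ => move/addnI: H => H; try subst
  end.

Section Terms.
Variables (K : fieldType) (t : bool).
Local Notation tm := (nbtm K).
Local Notation E := (nb_eq t).
Implicit Types f g h : tm.

Lemma nb_eq_wt n m f g : E n m f g -> wt f n m /\ wt g n m.
Proof.
elim=> {n m f g} *; repeat match goal with H : _ /\ _ |- _ => destruct H end;
  split; rewrite /Defs.Sub; wt_inv; wt_auto.
Qed.

Definition typed f := exists n m, wt f n m.

(* [nb_eq] extended to all terms, the ill-typed ones forming one extra class. *)
Definition nb_equiv f g := (exists n m, E n m f g) \/ (~ typed f /\ ~ typed g).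

Lemma nb_equiv_refl f : nb_equiv f f.
Proof. by have [[n [m W]]|] := EM (typed f); [left; exists n, m; apply: Defs.eq_refl|right]. Qed.

Lemma nb_equiv_wt f g n m : nb_equiv f g -> wt f n m <-> wt g n m.
Proof.
case=> [[n' [m' /nb_eq_wt[Wf Wg]]]|[Nf Ng]].
  by split=> W; [have [-> ->] := wt_uniq W Wf | have [-> ->] := wt_uniq W Wg].
by split=> W; [case: Nf | case: Ng]; exists n, m.
Qed.

Lemma nb_equivE f g n m : nb_equiv f g -> wt f n m -> E n m f g.
Proof.
case=> [[n' [m' H]]|[Nf _]] W; last by case: Nf; exists n, m.
by have [Wf _] := nb_eq_wt H; have [-> ->] := wt_uniq W Wf.
Qed.

Lemma nb_equiv_sym f g : nb_equiv f g -> nb_equiv g f.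
Proof. by case=> [[n [m H]]|[]]; [left; exists n, m; apply: Defs.eq_sym | right]. Qed.

Lemma nb_equiv_trans f g h : nb_equiv f g -> nb_equiv g h -> nb_equiv f h.
Proof.
move=> Hfg Hgh; have [[n [m W]]|N] := EM (typed f).
  left; exists n, m; apply: Defs.eq_trans (nb_equivE Hfg W) (nb_equivE Hgh _).
  by rewrite -(nb_equiv_wt _ _ Hfg).
right; split=> // -[n [m W]]; apply: N; exists n, m.
by rewrite (nb_equiv_wt _ _ Hfg) (nb_equiv_wt _ _ Hgh).
Qed.

Lemma nb_equivI f g :
  (forall n m, wt f n m -> E n m f g) -> (forall n m, wt g n m -> typed f) -> nb_equiv f g.
Proof.
move=> Hf Hg; have [[n [m W]]|N] := EM (typed f); first by left; exists n, m; apply: Hf.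
by right; split=> // -[n [m /Hg]].
Qed.

Lemma nb_equiv_Comp f f' g g' :
  nb_equiv f f' -> nb_equiv g g' -> nb_equiv (Comp f g) (Comp f' g').
Proof.
move=> Hf Hg; apply: nb_equivI => n m /wt_Comp_inv[k [Wg Wf]].
  by apply: Defs.eq_comp; [apply: nb_equivE Hf Wf | apply: nb_equivE Hg Wg].
exists n, m; apply: wt_comp; first by rewrite (nb_equiv_wt _ _ Hg); apply: Wg.
by rewrite (nb_equiv_wt _ _ Hf).
Qed.

Lemma nb_equiv_Tens f f' g g' :
  nb_equiv f f' -> nb_equiv g g' -> nb_equiv (Tens f g) (Tens f' g').
Proof.
move=> Hf Hg; apply: nb_equivI => n m /wt_Tens_inv[a [b [c [d [Wf Wg En Em]]]]]; subst.
  by apply: Defs.eq_tens; [apply: nb_equivE Hf Wf | apply: nb_equivE Hg Wg].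
exists (a + c)%N, (b + d)%N; apply: wt_tens (erefl _) (erefl _).
  by rewrite (nb_equiv_wt _ _ Hf).
by rewrite (nb_equiv_wt _ _ Hg).
Qed.

Lemma nb_equiv_Add f f' g g' :
  nb_equiv f f' -> nb_equiv g g' -> nb_equiv (Add f g) (Add f' g').
Proof.
move=> Hf Hg; apply: nb_equivI => n m /wt_Add_inv[Wf Wg].
  by apply: Defs.eq_add; [apply: nb_equivE Hf Wf | apply: nb_equivE Hg Wg].
by exists n, m; apply: wt_add; rewrite ?(nb_equiv_wt _ _ Hf) ?(nb_equiv_wt _ _ Hg).
Qed.

Lemma nb_equiv_Scal c f f' : nb_equiv f f' -> nb_equiv (Scal c f) (Scal c f').
Proof.
move=> Hf; apply: nb_equivI => n m /wt_Scal_inv W; first by apply/Defs.eq_scal/(nb_equivE Hf).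
by exists n, m; apply: wt_scal; rewrite (nb_equiv_wt _ _ Hf).
Qed.

End Terms.

Section Quotient.
Variables (K : fieldType) (t : bool).
Local Notation tm := (nbtm K).
Local Notation E := (nb_eq t).
Local Notation nb_equiv := (nb_equiv t).
Implicit Types f g h : tm.

HB.instance Definition _ := gen_eqMixin tm.
HB.instance Definition _ := gen_choiceMixin tm.

Definition nb_equivb : rel tm := fun f g => `[< nb_equiv f g >].

Lemma nb_equivb_is_equiv : equiv_class_of nb_equivb.
Proof.
split=> [f|f g|g f h]; rewrite /nb_equivb.
- exact/asboolP/nb_equiv_refl.
- by apply/asboolP/asboolP; apply: nb_equiv_sym.
- by move=> /asboolP Hfg /asboolP Hgh; apply/asboolP; apply: nb_equiv_trans Hfg Hgh.
Qed.

Definition nb_equiv_rel := EquivRelPack nb_equivb_is_equiv.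

Definition mor := {eq_quot nb_equiv_rel}.

Lemma eq_piP f g : reflect (\pi_mor f = \pi_mor g) `[< nb_equiv f g >].
Proof. exact: eqquotP. Qed.

Lemma nb_equiv_repr f : nb_equiv (repr (\pi_mor f)) f.
Proof. by apply/asboolP/eq_piP; rewrite reprK. Qed.

Lemma nb_eq_pi n m f g : E n m f g -> \pi_mor f = \pi_mor g.
Proof. by move=> H; apply/eq_piP/asboolP; left; exists n, m. Qed.

Lemma pi_eq_nb_eq n m f g : wt f n m -> \pi_mor f = \pi_mor g -> E n m f g.
Proof. by move=> W /eq_piP/asboolP/nb_equivE; apply. Qed.

Lemma pi_eqI f g :
  (forall n m, wt f n m -> E n m f g) -> (forall n m, wt g n m -> typed f) -> \pi_mor f = \pi_mor g.
Proof. by move=> Hf Hg; apply/eq_piP/asboolP/nb_equivI. Qed.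

Definition mcomp := lift_op2 mor (@Comp K).
Definition mtens := lift_op2 mor (@Tens K).
Definition madd := lift_op2 mor (@Add K).
Definition mscal c := lift_op1 mor (@Scal K c).
Definition mid n := \pi_mor (Id K n).
Definition mzero n m := \pi_mor (Zero K n m).
Definition mx := \pi_mor (Gx K).
Definition mtau := \pi_mor (Gtau K).
Definition mcap := \pi_mor (Gcap K).
Definition mcup := \pi_mor (Gcup K).

Lemma pi_Comp : {morph \pi_mor : f g / Comp f g >-> mcomp f g}.
Proof.
move=> f g; unlock mcomp; apply/eq_piP/asboolP/nb_equiv_Comp;
  by apply/nb_equiv_sym/nb_equiv_repr.
Qed.

Lemma pi_Tens : {morph \pi_mor : f g / Tens f g >-> mtens f g}.
Proof.
move=> f g; unlock mtens; apply/eq_piP/asboolP/nb_equiv_Tens;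
  by apply/nb_equiv_sym/nb_equiv_repr.
Qed.

Lemma pi_Add : {morph \pi_mor : f g / Add f g >-> madd f g}.
Proof.
move=> f g; unlock madd; apply/eq_piP/asboolP/nb_equiv_Add;
  by apply/nb_equiv_sym/nb_equiv_repr.
Qed.

Lemma pi_Scal c : {morph \pi_mor : f / Scal c f >-> mscal c f}.
Proof.
move=> f; unlock mscal; apply/eq_piP/asboolP/nb_equiv_Scal;
  by apply/nb_equiv_sym/nb_equiv_repr.
Qed.

Definition mwt (a : mor) n m := wt (repr a) n m.

Lemma mwt_pi f n m : mwt (\pi_mor f) n m <-> wt f n m.
Proof. exact: nb_equiv_wt (nb_equiv_repr f). Qed.

Lemma mwt_comp a b n m p : mwt b n m -> mwt a m p -> mwt (mcomp a b) n p.
Proof. by elim/quotW: a => f; elim/quotW: b => g; rewrite -pi_Comp !mwt_pi => *; wt_auto. Qed.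

Lemma mwt_tens a b n1 m1 n2 m2 n m : mwt a n1 m1 -> mwt b n2 m2 ->
  n = (n1 + n2)%N -> m = (m1 + m2)%N -> mwt (mtens a b) n m.
Proof. by elim/quotW: a => f; elim/quotW: b => g; rewrite -pi_Tens !mwt_pi => *; wt_auto. Qed.

Lemma mwt_add a b n m : mwt a n m -> mwt b n m -> mwt (madd a b) n m.
Proof. by elim/quotW: a => f; elim/quotW: b => g; rewrite -pi_Add !mwt_pi => *; wt_auto. Qed.

Lemma mwt_scal c a n m : mwt a n m -> mwt (mscal c a) n m.
Proof. by elim/quotW: a => f; rewrite -pi_Scal !mwt_pi => *; wt_auto. Qed.

Lemma mwt_id n : mwt (mid n) n n. Proof. by apply/mwt_pi; wt_auto. Qed.
Lemma mwt_zero n m : mwt (mzero n m) n m. Proof. by apply/mwt_pi; wt_auto. Qed.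
Lemma mwt_x : mwt mx 1 1. Proof. by apply/mwt_pi; wt_auto. Qed.
Lemma mwt_tau : mwt mtau 2 2. Proof. by apply/mwt_pi; wt_auto. Qed.
Lemma mwt_cap : mwt mcap 2 0. Proof. by apply/mwt_pi; wt_auto. Qed.
Lemma mwt_cup : mwt mcup 0 2. Proof. by apply/mwt_pi; wt_auto. Qed.

Lemma mcompA a b c : mcomp a (mcomp b c) = mcomp (mcomp a b) c.
Proof.
elim/quotW: a => f; elim/quotW: b => g; elim/quotW: c => h; rewrite -!pi_Comp.
by apply: pi_eqI => n m W; wt_inv; [apply: eq_compA; eauto | do 2 eexists; wt_auto].
Qed.

Lemma mcomp1l a m : (exists n, mwt a n m) -> mcomp (mid m) a = a.
Proof. by elim/quotW: a => f [n /mwt_pi W]; rewrite -pi_Comp; apply/nb_eq_pi/eq_id_comp/W. Qed.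

Lemma mcomp1r a n : (exists m, mwt a n m) -> mcomp a (mid n) = a.
Proof. by elim/quotW: a => f [m /mwt_pi W]; rewrite -pi_Comp; apply/nb_eq_pi/eq_comp_id/W. Qed.

Lemma mcompDl a b c : mcomp (madd a b) c = madd (mcomp a c) (mcomp b c).
Proof.
elim/quotW: a => f; elim/quotW: b => g; elim/quotW: c => h; rewrite -!(pi_Comp, pi_Add).
by apply: pi_eqI => n m W; wt_inv; [apply: eq_compDl; eauto | wt_unify; do 2 eexists; wt_auto].
Qed.

Lemma mcompDr a b c : mcomp a (madd b c) = madd (mcomp a b) (mcomp a c).
Proof.
elim/quotW: a => f; elim/quotW: b => g; elim/quotW: c => h; rewrite -!(pi_Comp, pi_Add).
by apply: pi_eqI => n m W; wt_inv; [apply: eq_compDr; eauto | wt_unify; do 2 eexists; wt_auto].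
Qed.

Lemma mcompZl c a b : mcomp (mscal c a) b = mscal c (mcomp a b).
Proof.
elim/quotW: a => f; elim/quotW: b => g; rewrite -!(pi_Comp, pi_Scal).
by apply: pi_eqI => n m W; wt_inv; [apply: eq_compZl; eauto | do 2 eexists; wt_auto].
Qed.

Lemma mcompZr c a b : mcomp a (mscal c b) = mscal c (mcomp a b).
Proof.
elim/quotW: a => f; elim/quotW: b => g; rewrite -!(pi_Comp, pi_Scal).
by apply: pi_eqI => n m W; wt_inv; [apply: eq_compZr; eauto | do 2 eexists; wt_auto].
Qed.

Lemma mtensA a b c : mtens a (mtens b c) = mtens (mtens a b) c.
Proof.
elim/quotW: a => f; elim/quotW: b => g; elim/quotW: c => h; rewrite -!pi_Tens.
by apply: pi_eqI => n m W; [apply: eq_tensA | wt_inv; do 2 eexists; wt_auto].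
Qed.

Lemma mtens0l a : mtens (mid 0) a = a.
Proof.
elim/quotW: a => f; rewrite -pi_Tens.
by apply: pi_eqI => n m W; [wt_inv; apply: eq_tens_unitl | do 2 eexists; wt_auto].
Qed.

Lemma mtens0r a : mtens a (mid 0) = a.
Proof.
elim/quotW: a => f; rewrite -pi_Tens.
by apply: pi_eqI => n m W; [wt_inv; rewrite !addn0; apply: eq_tens_unitr | do 2 eexists; wt_auto].
Qed.

Lemma mtens_id a b : mtens (mid a) (mid b) = mid (a + b).
Proof. by rewrite -pi_Tens; apply/nb_eq_pi/eq_tens_id. Qed.

Definition composable a b := exists n m p, mwt b n m /\ mwt a m p.

Lemma minterchange a a' b b' : composable a a' -> composable b b' ->
  mtens (mcomp a a') (mcomp b b') = mcomp (mtens a b) (mtens a' b').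
Proof.
elim/quotW: a => f; elim/quotW: a' => f'; elim/quotW: b => g; elim/quotW: b' => g'.
move=> [n1 [m1 [p1 [/mwt_pi W1 /mwt_pi W2]]]] [n2 [m2 [p2 [/mwt_pi W3 /mwt_pi W4]]]].
by rewrite -!(pi_Comp, pi_Tens); apply: nb_eq_pi; apply: eq_interchange W1 W2 W3 W4.
Qed.

Lemma mtensDl a b c : mtens (madd a b) c = madd (mtens a c) (mtens b c).
Proof.
elim/quotW: a => f; elim/quotW: b => g; elim/quotW: c => h; rewrite -!(pi_Tens, pi_Add).
by apply: pi_eqI => n m W; [apply: eq_tensDl | wt_inv; wt_unify; do 2 eexists; wt_auto].
Qed.

Lemma mtensDr a b c : mtens a (madd b c) = madd (mtens a b) (mtens a c).
Proof.
elim/quotW: a => f; elim/quotW: b => g; elim/quotW: c => h; rewrite -!(pi_Tens, pi_Add).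
by apply: pi_eqI => n m W; [apply: eq_tensDr | wt_inv; wt_unify; do 2 eexists; wt_auto].
Qed.

Lemma mtensZl c a b : mtens (mscal c a) b = mscal c (mtens a b).
Proof.
elim/quotW: a => f; elim/quotW: b => g; rewrite -!(pi_Tens, pi_Scal).
by apply: pi_eqI => n m W; wt_inv; [apply: eq_tensZl; wt_auto | do 2 eexists; wt_auto].
Qed.

Lemma mtensZr c a b : mtens a (mscal c b) = mscal c (mtens a b).
Proof.
elim/quotW: a => f; elim/quotW: b => g; rewrite -!(pi_Tens, pi_Scal).
by apply: pi_eqI => n m W; wt_inv; [apply: eq_tensZr; wt_auto | do 2 eexists; wt_auto].
Qed.

Lemma maddA a b c : madd a (madd b c) = madd (madd a b) c.
Proof.
elim/quotW: a => f; elim/quotW: b => g; elim/quotW: c => h; rewrite -!pi_Add.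
by apply: pi_eqI => n m W; wt_inv; [apply: eq_addA | do 2 eexists; wt_auto].
Qed.

Lemma maddC a b : madd a b = madd b a.
Proof.
elim/quotW: a => f; elim/quotW: b => g; rewrite -!pi_Add.
by apply: pi_eqI => n m W; wt_inv; [apply: eq_addC | do 2 eexists; wt_auto].
Qed.

Lemma madd0 a n m : mwt a n m -> madd a (mzero n m) = a.
Proof. by elim/quotW: a => f /mwt_pi W; rewrite -pi_Add; apply/nb_eq_pi/eq_add0. Qed.

Lemma maddN a n m : mwt a n m -> madd a (mscal (-1) a) = mzero n m.
Proof. by elim/quotW: a => f /mwt_pi W; rewrite -pi_Scal -pi_Add; apply/nb_eq_pi/eq_addN. Qed.

Lemma mscal1 a : mscal 1 a = a.
Proof.
elim/quotW: a => f; rewrite -pi_Scal.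
by apply: pi_eqI => n m W; wt_inv; [apply: eq_scal1 | do 2 eexists; wt_auto].
Qed.

Lemma mscalA c d a : mscal c (mscal d a) = mscal (c * d) a.
Proof.
elim/quotW: a => f; rewrite -!pi_Scal.
by apply: pi_eqI => n m W; wt_inv; [apply: eq_scalA | do 2 eexists; wt_auto].
Qed.

Lemma mscalDr c a b : mscal c (madd a b) = madd (mscal c a) (mscal c b).
Proof.
elim/quotW: a => f; elim/quotW: b => g; rewrite -!(pi_Scal, pi_Add).
by apply: pi_eqI => n m W; wt_inv; [apply: eq_scalDr | do 2 eexists; wt_auto].
Qed.

Lemma mscalDl c d a : mscal (c + d) a = madd (mscal c a) (mscal d a).
Proof.
elim/quotW: a => f; rewrite -!(pi_Scal, pi_Add).
by apply: pi_eqI => n m W; wt_inv; [apply: eq_scalDl | do 2 eexists; wt_auto].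
Qed.

Lemma mzigzag1 : mcomp (mtens mcap (mid 1)) (mtens (mid 1) mcup) = mid 1.
Proof. by rewrite -!(pi_Comp, pi_Tens); apply/nb_eq_pi/rel_zigzag1. Qed.

Lemma mzigzag2 : mcomp (mtens (mid 1) mcap) (mtens mcup (mid 1)) = mid 1.
Proof. by rewrite -!(pi_Comp, pi_Tens); apply/nb_eq_pi/rel_zigzag2. Qed.

Lemma mpitchfork : mcomp (mtens (mid 1) mcap) (mtens mtau (mid 1)) =
  mcomp (mtens mcap (mid 1)) (mtens (mid 1) mtau).
Proof. by rewrite -!(pi_Comp, pi_Tens); apply/nb_eq_pi/rel_pitchfork. Qed.

Lemma mdot_slide :
  madd (mcomp (mtens mx (mid 1)) mtau) (mscal (-1) (mcomp mtau (mtens (mid 1) mx))) =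
  madd (mtens (mid 1) (mid 1)) (mscal (-1) (mcomp mcup mcap)).
Proof. by rewrite -!(pi_Comp, pi_Tens, pi_Add, pi_Scal); apply/nb_eq_pi/rel_dot_slide. Qed.

Lemma mcap_dot : mcomp mcap (mtens (mid 1) mx) = mscal (-1) (mcomp mcap (mtens mx (mid 1))).
Proof. by rewrite -!(pi_Comp, pi_Tens, pi_Scal); apply/nb_eq_pi/rel_cap_dot. Qed.

End Quotient.

(** * Hom spaces and endomorphism rings *)

Definition nbhom (K : fieldType) (t : bool) (n m : nat) := {a : mor K t | mwt a n m}.

Section HomLmodule.
Variables (K : fieldType) (t : bool) (n m : nat).
Local Notation H := (nbhom K t n m).

HB.instance Definition _ := gen_eqMixin H.
HB.instance Definition _ := gen_choiceMixin H.

Lemma nbhom_inj (a b : H) : sval a = sval b -> a = b.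
Proof. by move=> e; apply: eq_sig_hprop e => *; apply: Prop_irrelevance. Qed.

Definition hzero : H := exist _ (mzero K t n m) (mwt_zero _ _ _ _).
Definition hadd (a b : H) : H := exist _ (madd (sval a) (sval b)) (mwt_add (svalP a) (svalP b)).
Definition hscal (c : K) (a : H) : H := exist _ (mscal c (sval a)) (mwt_scal c (svalP a)).

Lemma haddA : associative hadd.
Proof. by move=> a b c; apply: nbhom_inj; rewrite /= maddA. Qed.
Lemma haddC : commutative hadd.
Proof. by move=> a b; apply: nbhom_inj; rewrite /= maddC. Qed.
Lemma hadd0 : left_id hzero hadd.
Proof. by move=> a; apply: nbhom_inj; rewrite /= maddC (madd0 (svalP a)). Qed.
Lemma haddN : left_inverse hzero (hscal (-1)) hadd.
Proof. by move=> a; apply: nbhom_inj; rewrite /= maddC (maddN (svalP a)). Qed.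

HB.instance Definition _ := GRing.isZmodule.Build H haddA haddC hadd0 haddN.

Lemma hscalA c d (a : H) : hscal c (hscal d a) = hscal (c * d) a.
Proof. by apply: nbhom_inj; rewrite /= mscalA. Qed.
Lemma hscal1 : left_id 1 hscal.
Proof. by move=> a; apply: nbhom_inj; rewrite /= mscal1. Qed.
Lemma hscalDr : right_distributive hscal +%R.
Proof. by move=> c a b; apply: nbhom_inj; rewrite /= mscalDr. Qed.
Lemma hscalDl (a : H) : {morph hscal^~ a : c d / c + d}.
Proof. by move=> c d; apply: nbhom_inj; rewrite /= mscalDl. Qed.

HB.instance Definition _ := GRing.Zmodule_isLmodule.Build K H hscalA hscal1 hscalDr hscalDl.

End HomLmodule.

Section HomOps.
Variables (K : fieldType) (t : bool).
Local Notation nbhom := (nbhom K t).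

Definition hcomp n m p (a : nbhom m p) (b : nbhom n m) : nbhom n p :=
  exist _ (mcomp (sval a) (sval b)) (mwt_comp (svalP b) (svalP a)).
Definition htens n1 m1 n2 m2 (a : nbhom n1 m1) (b : nbhom n2 m2) : nbhom (n1 + n2) (m1 + m2) :=
  exist _ (mtens (sval a) (sval b)) (mwt_tens (svalP a) (svalP b) erefl erefl).
Definition hid n : nbhom n n := exist _ (mid K t n) (mwt_id _ _ _).
Definition hx : nbhom 1 1 := exist _ (mx K t) (mwt_x _ _).
Definition htau : nbhom 2 2 := exist _ (mtau K t) (mwt_tau _ _).
Definition hcap : nbhom 2 0 := exist _ (mcap K t) (mwt_cap _ _).
Definition hcup : nbhom 0 2 := exist _ (mcup K t) (mwt_cup _ _).

Lemma hcompA n m p q (a : nbhom p q) (b : nbhom m p) (c : nbhom n m) :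
  hcomp a (hcomp b c) = hcomp (hcomp a b) c.
Proof. by apply: nbhom_inj; rewrite /= mcompA. Qed.
Lemma hcomp1l n m (a : nbhom n m) : hcomp (hid m) a = a.
Proof. by apply: nbhom_inj; rewrite /= mcomp1l //; exists n; exact: (svalP a). Qed.
Lemma hcomp1r n m (a : nbhom n m) : hcomp a (hid n) = a.
Proof. by apply: nbhom_inj; rewrite /= mcomp1r //; exists m; exact: (svalP a). Qed.

Lemma hcomp_is_bilinear n m p : bilinear_for
  (GRing.Scale.Law.clone _ _ *:%R _) (GRing.Scale.Law.clone _ _ *:%R _) (@hcomp n m p).
Proof.
by split=> [c|a] k u v; apply: nbhom_inj; rewrite /= ?mcompDl ?mcompDr ?mcompZl ?mcompZr.
Qed.

HB.instance Definition _ n m p :=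
  bilinear_isBilinear.Build K (nbhom m p) (nbhom n m) (nbhom n p)
  _ _ (@hcomp n m p) (hcomp_is_bilinear n m p).

Lemma htens_is_bilinear n1 m1 n2 m2 : bilinear_for
  (GRing.Scale.Law.clone _ _ *:%R _) (GRing.Scale.Law.clone _ _ *:%R _) (@htens n1 m1 n2 m2).
Proof.
by split=> [c|a] k u v; apply: nbhom_inj; rewrite /= ?mtensDl ?mtensDr ?mtensZl ?mtensZr.
Qed.

HB.instance Definition _ n1 m1 n2 m2 :=
  bilinear_isBilinear.Build K (nbhom n1 m1) (nbhom n2 m2) (nbhom (n1 + n2) (m1 + m2))
  _ _ (@htens n1 m1 n2 m2) (htens_is_bilinear n1 m1 n2 m2).

Lemma hcomp0l n m p (b : nbhom n m) : hcomp (0 : nbhom m p) b = 0.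
Proof. exact: linear0l. Qed.

Lemma hcomp0r n m p (a : nbhom m p) : hcomp a (0 : nbhom n m) = 0.
Proof. exact: linear0r. Qed.

Lemma hcomp_suml n m p I (r : seq I) (P : pred I) (F : I -> nbhom m p) (c : nbhom n m) :
  hcomp (\sum_(i <- r | P i) F i) c = \sum_(i <- r | P i) hcomp (F i) c.
Proof. exact: linear_sumlz. Qed.

Lemma hcomp_sumr n m p I (r : seq I) (P : pred I) (F : I -> nbhom n m) (c : nbhom m p) :
  hcomp c (\sum_(i <- r | P i) F i) = \sum_(i <- r | P i) hcomp c (F i).
Proof. exact: linear_sumr. Qed.

Lemma hinterchange n1 m1 p1 n2 m2 p2 (a : nbhom m1 p1) (a' : nbhom n1 m1)
    (b : nbhom m2 p2) (b' : nbhom n2 m2) :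
  hcomp (htens a b) (htens a' b') = htens (hcomp a a') (hcomp b b').
Proof.
apply: nbhom_inj; rewrite /= minterchange //; do 3 eexists.
  by split; [exact: (svalP a') | exact: (svalP a)].
by split; [exact: (svalP b') | exact: (svalP b)].
Qed.

Lemma htens_id a b : htens (hid a) (hid b) = hid (a + b).
Proof. by apply: nbhom_inj; rewrite /= mtens_id. Qed.

End HomOps.

Definition nbend (K : fieldType) (t : bool) n := nbhom K t n n.

Section EndRing.
Variables (K : fieldType) (t : bool).
Local Notation nbend := (nbend K t).

HB.instance Definition _ n := GRing.Lmodule.on (nbend n).

Lemma hcompDl n : left_distributive (@hcomp K t n n n) +%R.
Proof. by move=> a b c; rewrite linearDl. Qed.
Lemma hcompDr n : right_distributive (@hcomp K t n n n) +%R.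
Proof. by move=> a b c; rewrite linearDr. Qed.

HB.instance Definition _ n := GRing.Zmodule_isPzRing.Build (nbend n)
  (@hcompA _ _ n n n n) (@hcomp1l _ _ n n) (@hcomp1r _ _ n n) (@hcompDl n) (@hcompDr n).

Lemma mulE n (a b : nbend n) : a * b = hcomp a b. Proof. by []. Qed.
Lemma oneE n : 1 = hid K t n :> nbend n. Proof. by []. Qed.

Lemma scalerAl_end n k (a b : nbend n) : k *: (a * b) = (k *: a) * b.
Proof. by rewrite !mulE linearZl_LR. Qed.
Lemma scalerAr_end n k (a b : nbend n) : k *: (a * b) = a * (k *: b).
Proof. by rewrite !mulE linearZr_LR. Qed.

Definition tensl a b (u : nbend a) : nbend (a + b) := htens u (hid K t b).
Definition tensr a b (u : nbend b) : nbend (a + b) := htens (hid K t a) u.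

Section TensId.
Variables a b : nat.

Lemma tensl_is_zmod_morphism : zmod_morphism (@tensl a b).
Proof. by move=> u v; rewrite /tensl linearBl. Qed.
HB.instance Definition _ :=
  GRing.isZmodMorphism.Build (nbend a) (nbend (a + b)) (@tensl a b) tensl_is_zmod_morphism.

Lemma tensl_is_monoid_morphism : monoid_morphism (@tensl a b).
Proof.
by split=> [|u v]; rewrite /tensl ?oneE ?htens_id // [RHS]mulE hinterchange hcomp1l.
Qed.
HB.instance Definition _ :=
  GRing.isMonoidMorphism.Build (nbend a) (nbend (a + b)) (@tensl a b) tensl_is_monoid_morphism.

Lemma tensr_is_zmod_morphism : zmod_morphism (@tensr a b).
Proof. by move=> u v; rewrite /tensr linearBr. Qed.
HB.instance Definition _ :=
  GRing.isZmodMorphism.Build (nbend b) (nbend (a + b)) (@tensr a b) tensr_is_zmod_morphism.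

Lemma tensr_is_monoid_morphism : monoid_morphism (@tensr a b).
Proof.
by split=> [|u v]; rewrite /tensr ?oneE ?htens_id // [RHS]mulE hinterchange hcomp1l.
Qed.
HB.instance Definition _ :=
  GRing.isMonoidMorphism.Build (nbend b) (nbend (a + b)) (@tensr a b) tensr_is_monoid_morphism.

Lemma tensl_scale k (u : nbend a) : tensl b (k *: u) = k *: tensl b u.
Proof. exact: linearZl_LR. Qed.

Lemma tensr_scale k (u : nbend b) : tensr a (k *: u) = k *: tensr a u.
Proof. exact: linearZr_LR. Qed.

Lemma tensl_mul_tensr (u : nbend a) (v : nbend b) : tensl b u * tensr a v = htens u v.
Proof. by rewrite mulE /tensl /tensr hinterchange hcomp1l hcomp1r. Qed.

End TensId.
End EndRing.

(** * Consequences of the defining relations *)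

Ltac mwt_auto := lazymatch goal with
  | |- mwt (mcomp _ _) _ _ => eapply mwt_comp; [mwt_auto | mwt_auto]
  | |- mwt (mtens _ _) _ _ => eapply mwt_tens; [mwt_auto | mwt_auto | reflexivity | reflexivity]
  | |- mwt (madd _ _) _ _ => eapply mwt_add; [mwt_auto | mwt_auto]
  | |- mwt (mscal _ _) _ _ => eapply mwt_scal; mwt_auto
  | |- mwt (mid _ _ _) _ _ => apply: mwt_id
  | |- mwt (mx _ _) _ _ => apply: mwt_x
  | |- mwt (mtau _ _) _ _ => apply: mwt_tau
  | |- mwt (mcap _ _) _ _ => apply: mwt_cap
  | |- mwt (mcup _ _) _ _ => apply: mwt_cup
  | H : mwt ?a _ _ |- mwt ?a _ _ => exact: H
  end.

Ltac mwt_solve := repeat match goal with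
  | |- composable _ _ => do 3 eexists
  | |- exists _, _ => eexists
  | |- _ /\ _ => split
  end; mwt_auto.

Section Diagrams.
Variables (K : fieldType) (t : bool).
Local Notation mor := (mor K t).
Local Notation mid := (mid K t).
Local Notation I := (mid 1).
Local Notation X := (mx K t).
Local Notation T := (mtau K t).
Local Notation CAP := (mcap K t).
Local Notation CUP := (mcup K t).
Local Notation "a ⊗ b" := (mtens a b) (at level 40, left associativity).
Local Notation "a ∘ b" := (mcomp a b) (at level 45, right associativity).
Implicit Types a b f g : mor.

Lemma mtens_comp_idl k a b : composable a b -> mid k ⊗ (a ∘ b) = (mid k ⊗ a) ∘ (mid k ⊗ b).
Proof. by move=> ab; rewrite -minterchange ?mcomp1l //; mwt_solve. Qed.

Lemma mtens_comp_idr k a b : composable a b -> (a ∘ b) ⊗ mid k = (a ⊗ mid k) ∘ (b ⊗ mid k).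
Proof. by move=> ab; rewrite -minterchange ?mcomp1l //; mwt_solve. Qed.

Lemma mtens_split_l a b m1 n2 :
  (exists n1, mwt a n1 m1) -> (exists m2, mwt b n2 m2) -> (mid m1 ⊗ b) ∘ (a ⊗ mid n2) = a ⊗ b.
Proof.
move=> [n1 Ha] [m2 Hb]; rewrite -minterchange; try mwt_solve.
by rewrite mcomp1l ?mcomp1r //; [exists m2 | exists n1].
Qed.

Lemma mtens_split_r a b n1 m2 :
  (exists m1, mwt a n1 m1) -> (exists n2, mwt b n2 m2) -> (a ⊗ mid m2) ∘ (mid n1 ⊗ b) = a ⊗ b.
Proof.
move=> [m1 Ha] [n2 Hb]; rewrite -minterchange; try mwt_solve.
by rewrite mcomp1l ?mcomp1r //; [exists m1 | exists n2].
Qed.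

Lemma mid2 : mid 2 = I ⊗ I.
Proof. by rewrite mtens_id. Qed.

Lemma mzigzag2_tens : (I ⊗ (CAP ⊗ I)) ∘ (CUP ⊗ (I ⊗ I)) = I ⊗ I.
Proof. by rewrite !mtensA -minterchange ?mzigzag2 ?mcomp1l //; mwt_solve. Qed.

(* [mbend] turns a diagram [0 -> 2] into one [1 -> 1] and [mbendK] turns it
   back; this transfers [mcap_dot] from caps to cups. *)
Definition mbend a := (CAP ⊗ I) ∘ (I ⊗ a).

Lemma mbendK a : mwt a 0 2 -> (I ⊗ mbend a) ∘ CUP = a.
Proof.
move=> Ha; rewrite /mbend mtens_comp_idl; last by mwt_solve.
rewrite -mcompA [I ⊗ (I ⊗ a)]mtensA mtens_id.
rewrite -[X in _ ∘ (_ ∘ X)](mtens0r CUP) mtens_split_l; try mwt_solve.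
rewrite -[X in _ ∘ X](@mtens_split_r _ _ 0 2); try mwt_solve.
by rewrite mtens0l mcompA mid2 mzigzag2_tens -mid2 mcomp1l //; mwt_solve.
Qed.

Lemma mbend_dot_l : mbend ((X ⊗ I) ∘ CUP) = mscal (-1) X.
Proof.
rewrite /mbend mtens_comp_idl; last by mwt_solve.
rewrite mcompA mtensA -mtens_comp_idr; last by mwt_solve.
rewrite mcap_dot mtensZl mcompZl mtens_comp_idr; last by mwt_solve.
rewrite -mtensA mtens_id -mcompA (@mtens_split_r _ _ 1); try mwt_solve.
rewrite -[X in _ ∘ X](@mtens_split_l _ _ 1 0); try mwt_solve.
by rewrite mtens0r mcompA mzigzag1 mcomp1l //; mwt_solve.
Qed.

Lemma mcup_dot : (X ⊗ I) ∘ CUP = mscal (-1) ((I ⊗ X) ∘ CUP).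
Proof.
rewrite -[LHS]mbendK; last by mwt_solve.
by rewrite mbend_dot_l mtensZr mcompZl.
Qed.

(* Quarter-turn rotation of diagrams [2 -> 2]: it fixes tau (by the pitchfork
   relation) and swaps [1] and [cup o cap], so it maps the dot slide relation to
   its mirror image. *)
Definition mrot f := (I ⊗ (I ⊗ CAP)) ∘ ((I ⊗ (f ⊗ I)) ∘ (CUP ⊗ (I ⊗ I))).

Lemma mrot_add f g : mrot (madd f g) = madd (mrot f) (mrot g).
Proof. by rewrite /mrot mtensDl mtensDr mcompDl mcompDr. Qed.

Lemma mrot_scal c f : mrot (mscal c f) = mscal c (mrot f).
Proof. by rewrite /mrot mtensZl mtensZr mcompZl mcompZr. Qed.

Lemma mrot_tau : mrot T = T.
Proof.
rewrite /mrot mcompA -mtens_comp_idl; last by mwt_solve.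
rewrite mpitchfork mtens_comp_idl; last by mwt_solve.
rewrite -mcompA [I ⊗ (I ⊗ T)]mtensA -!mid2 mtens_split_l; try mwt_solve.
rewrite -(@mtens_split_r CUP T 0 2); try mwt_solve.
by rewrite mtens0l mcompA mid2 mzigzag2_tens -mid2 mcomp1l //; mwt_solve.
Qed.

Lemma mrot_dot_l f : mwt f 2 2 -> mrot ((X ⊗ I) ∘ f) = (I ⊗ X) ∘ mrot f.
Proof.
move=> Hf; rewrite /mrot mtens_comp_idr; last by mwt_solve.
rewrite mtens_comp_idl; last by mwt_solve.
rewrite !mcompA -mtens_comp_idl; last by mwt_solve.
rewrite -[(X ⊗ I) ⊗ I]mtensA mtens_id mtens_split_l; try mwt_solve.
rewrite -(@mtens_split_r X CAP 1 0); try mwt_solve.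
by rewrite mtens0r mtens_comp_idl; try mwt_solve.
Qed.

Lemma mrot_dot_r f : mwt f 2 2 -> mrot (f ∘ (I ⊗ X)) = mrot f ∘ (X ⊗ I).
Proof.
move=> Hf; rewrite /mrot mtens_comp_idr; last by mwt_solve.
rewrite mtens_comp_idl; last by mwt_solve.
rewrite -!mcompA -[(I ⊗ X) ⊗ I]mtensA [I ⊗ (I ⊗ (X ⊗ I))]mtensA -!mid2.
rewrite mtens_split_l; try mwt_solve.
by rewrite -(@mtens_split_r CUP (X ⊗ I) 0 2) ?mtens0l; try mwt_solve.
Qed.

Lemma mrot_id : mrot (mid 2) = CUP ∘ CAP.
Proof.
rewrite /mrot !mtens_id mcomp1l; last by mwt_solve.
rewrite [I ⊗ (I ⊗ CAP)]mtensA -!mid2 mtens_split_l; try mwt_solve.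
by rewrite -(@mtens_split_r CUP CAP 0 0) ?mtens0l ?mtens0r; try mwt_solve.
Qed.

Lemma mrot_cupcap : mrot (CUP ∘ CAP) = mid 2.
Proof.
rewrite /mrot mtens_comp_idr; last by mwt_solve.
rewrite mtens_comp_idl; last by mwt_solve.
rewrite -[X in _ ∘ X]mcompA mzigzag2_tens mcompA -mtens_comp_idl; last by mwt_solve.
by rewrite mzigzag2 -mid2 mcomp1l //; mwt_solve.
Qed.

Lemma mdot_slide_rot :
  madd ((I ⊗ X) ∘ T) (mscal (-1) (T ∘ (X ⊗ I))) = madd (CUP ∘ CAP) (mscal (-1) (mid 2)).
Proof.
have := congr1 mrot (mdot_slide K t).
rewrite !mrot_add !mrot_scal mrot_dot_l; last by mwt_solve.
by rewrite mrot_dot_r ?mrot_tau -?mid2 ?mrot_id ?mrot_cupcap //; mwt_solve.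
Qed.

End Diagrams.

(** * Dots and evaluation of polynomials *)

Section Dots.
Variables (K : fieldType) (t : bool).
Local Notation mid := (mid K t).
Local Notation X := (mx K t).
Local Notation "a ⊗ b" := (mtens a b) (at level 40, left associativity).
Local Notation "a ∘ b" := (mcomp a b) (at level 45, right associativity).

(* The dot on strand [i] of [n], numbered from 0: [mxi n i] is x_{i+1} 1_n. *)
Definition mxi (n i : nat) := mid i ⊗ (X ⊗ mid (n - i.+1)).

Lemma mwt_mxi n i : (i < n)%N -> mwt (mxi n i) n n.
Proof.
move=> lt_in; apply: (@mwt_tens _ _ _ _ i i (n - i) (n - i)); try lia; first exact: mwt_id.
by apply: mwt_tens (mwt_x _ _) (mwt_id _ _ _) _ _; lia.
Qed.

Lemma mxi_lsplit a b i : (i < a)%N -> mxi (a + b) i = mxi a i ⊗ mid b.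
Proof.
move=> lt_ia; rewrite /mxi; have -> : (a + b - i.+1 = a - i.+1 + b)%N by lia.
by rewrite -mtens_id !mtensA.
Qed.

Lemma mxi_rsplit a b j : (j < b)%N -> mxi (a + b) (a + j) = mid a ⊗ mxi b j.
Proof.
move=> lt_jb; rewrite /mxi; have -> : (a + b - (a + j).+1 = b - j.+1)%N by lia.
by rewrite -mtens_id -mtensA.
Qed.

Lemma mxi_comm n i j : (i < n)%N -> (j < n)%N -> mxi n i ∘ mxi n j = mxi n j ∘ mxi n i.
Proof.
wlog lt_ij : i j / (i < j)%N.
  move=> H Hi Hj; case: (ltngtP i j) => [||->] // lt; [exact: H | exact/esym/H].
move=> Hi Hj; have En : n = (i.+1 + (n - i.+1))%N by lia.
have Ej : j = (i.+1 + (j - i.+1))%N by lia.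
have Wi : mwt (mxi i.+1 i) i.+1 i.+1 by apply: mwt_mxi.
have Wj : mwt (mxi (n - i.+1) (j - i.+1)) (n - i.+1) (n - i.+1) by apply: mwt_mxi; lia.
rewrite En mxi_lsplit // Ej mxi_rsplit; last by lia.
by rewrite mtens_split_r ?mtens_split_l //; eexists; eassumption.
Qed.

End Dots.

Section Evaluation.
Variables (K : fieldType) (t : bool) (n : nat).
Local Notation nbend := (nbend K t).
Local Notation P := {mpoly K[n]}.

Lemma pi_xi_tm (i : 'I_n) : \pi_(mor K t) (xi_tm K i) = mxi K t n i.
Proof. by rewrite /xi_tm !pi_Tens. Qed.

Definition xend (i : 'I_n) : nbend n := exist _ (mxi K t n i) (mwt_mxi K t (ltn_ord i)).

Lemma xend_comm (i j : 'I_n) : GRing.comm (xend i) (xend j).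
Proof. by apply: nbhom_inj; apply: mxi_comm. Qed.

Definition xmono (m : 'X_{1..n}) : nbend n := \prod_(i < n) xend i ^+ m i.

Definition ev (p : P) : nbend n := \sum_(m <- msupp p) p@_m *: xmono m.

Lemma xmono0 : xmono 0%MM = 1.
Proof. by rewrite /xmono big1 // => i _; rewrite mnm0E expr0. Qed.

Lemma xmonoD m1 m2 : xmono (m1 + m2)%MM = xmono m1 * xmono m2.
Proof.
have comm k j (s : seq 'I_n) (F : 'I_n -> nat) :
    GRing.comm (xend j ^+ k) (\prod_(i <- s) xend i ^+ F i).
  by apply: commr_prod => i _; apply/commrX/commr_sym/commrX/xend_comm.
rewrite /xmono; elim: (index_enum 'I_n) => [|i s IH]; first by rewrite !big_nil mulr1.
rewrite !big_cons IH mnmDE exprD -!mulrA; congr (_ * _).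
by rewrite !mulrA (comm (m2 i) i s m1).
Qed.

Lemma xmonoU (i : 'I_n) : xmono U_(i)%MM = xend i.
Proof.
rewrite /xmono (eq_bigr (fun j => if j == i then xend i else 1)) => [|j _].
  by rewrite -big_mkcond big_pred1_eq.
by rewrite mnm1E eq_sym; case: eqP => [->|]; rewrite ?expr1 ?expr0.
Qed.

Lemma evE k p : (msize p <= k)%N -> ev p = \sum_(m : 'X_{1..n < k}) p@_m *: xmono m.
Proof.
move=> le_pk; rewrite /ev (big_mksub 'X_{1..n < k}) ?msupp_uniq //=; last first.
  by move=> m /msize_mdeg_lt /leq_trans; apply.
by rewrite big_rmcond //= => m /memN_msupp_eq0 ->; rewrite scale0r.
Qed.

Lemma ev_is_zmod_morphism : zmod_morphism ev.
Proof.
move=> p q; rewrite !(@evE (msize p + msize q + msize (p - q))); try lia.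
by rewrite -sumrB; apply: eq_bigr => m _; rewrite mcoeffB scalerBl.
Qed.
HB.instance Definition _ := GRing.isZmodMorphism.Build P (nbend n) ev ev_is_zmod_morphism.

Lemma evZ c p : ev (c *: p) = c *: ev p.
Proof.
rewrite !(@evE (msize p + msize (c *: p))); try lia.
by rewrite scaler_sumr; apply: eq_bigr => m _; rewrite mcoeffZ scalerA.
Qed.

Lemma evX m : ev 'X_[m] = xmono m.
Proof. by rewrite /ev msuppX big_seq1 mcoeffX eqxx scale1r. Qed.

Lemma ev_is_monoid_morphism : monoid_morphism ev.
Proof.
split=> [|p q]; first by rewrite -mpolyX0 evX xmono0.
rewrite (@mpolywME _ _ _ _ (msize p + msize q)); try lia.
rewrite raddf_sum /= !(@evE (msize p + msize q)); try lia.
rewrite big_distrlr /= pair_bigA; apply/eq_bigr => -[m1 m2] _ /=.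
by rewrite evZ evX xmonoD -scalerAl_end -scalerAr_end scalerA.
Qed.
HB.instance Definition _ := GRing.isMonoidMorphism.Build P (nbend n) ev ev_is_monoid_morphism.

Lemma evC c : ev c%:MP = c *: (1 : nbend n).
Proof. by rewrite -[c%:MP]mulr1 mul_mpolyC evZ rmorph1. Qed.

Lemma evXi (i : 'I_n) : ev 'X_i = xend i.
Proof. by rewrite evX xmonoU. Qed.

Lemma ev_comm p q : GRing.comm (ev p) (ev q).
Proof. by rewrite /GRing.comm -!rmorphM mulrC. Qed.

Lemma pi_poly_tm (p : P) : \pi_(mor K t) (poly_tm p) = sval (ev p).
Proof.
have pi_mono (m : 'X_{1..n}) : \pi_(mor K t) (mono_tm K m) = sval (xmono m).
  rewrite /mono_tm /xmono /index_enum -enumT; elim: (enum 'I_n) => [|i s IH] /=.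
    by rewrite big_nil.
  rewrite big_cons pi_Comp IH; congr mcomp; elim: (m i) => [|k IHk] //=.
  by rewrite exprS pi_Comp IHk pi_xi_tm.
rewrite /poly_tm /ev; elim: (msupp p) => [|m s IH] /=; first by rewrite big_nil.
by rewrite big_cons pi_Add pi_Scal IH pi_mono.
Qed.

Lemma wt_poly_tm (p : P) : wt (poly_tm p) n n.
Proof. by apply/(mwt_pi t); rewrite pi_poly_tm; apply: (svalP (ev p)). Qed.

End Evaluation.

Section EvalShift.
Variables (K : fieldType) (t : bool) (a b : nat).

Lemma xend_lshift (i : 'I_a) : xend K t (lshift b i) = tensl b (xend K t i).
Proof. by apply: nbhom_inj; rewrite /= mxi_lsplit. Qed.

Lemma xend_rshift (j : 'I_b) : xend K t (rshift a j) = tensr a (xend K t j).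
Proof. by apply: nbhom_inj; rewrite /= mxi_rsplit. Qed.

Lemma ev_mshiftl (p : {mpoly K[a]}) : ev t (mshiftl K a b p) = tensl b (ev t p).
Proof.
rewrite /mshiftl /= /mmap rmorph_sum /ev raddf_sum; apply: eq_bigr => m _.
rewrite rmorphM /= evC -scalerAl_end mul1r tensl_scale /xmono !rmorph_prod; congr (_ *: _).
by apply: eq_bigr => i _; rewrite !rmorphXn /= evXi xend_lshift.
Qed.

Lemma ev_mshiftr (p : {mpoly K[b]}) : ev t (mshiftr K a b p) = tensr a (ev t p).
Proof.
rewrite /mshiftr /= /mmap rmorph_sum /ev raddf_sum; apply: eq_bigr => m _.
rewrite rmorphM /= evC -scalerAl_end mul1r tensr_scale /xmono !rmorph_prod; congr (_ *: _).
by apply: eq_bigr => j _; rewrite !rmorphXn /= evXi xend_rshift.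
Qed.

End EvalShift.

(** * Centrality *)

Section TwoStrands.
Variables (K : fieldType) (t : bool).
Local Notation nbend := (nbend K t).
Local Notation x1 := (xend K t (0 : 'I_2)).
Local Notation x2 := (xend K t (1 : 'I_2)).
Local Notation tau := (htau K t : nbend 2).
Local Notation cap := (hcap K t).
Local Notation cup := (hcup K t).
Local Notation C := (hcomp cup cap : nbend 2).

Lemma sval_x1 : sval x1 = mtens (mx K t) (mid K t 1).
Proof. by rewrite /= /mxi mtens0l. Qed.

Lemma sval_x2 : sval x2 = mtens (mid K t 1) (mx K t).
Proof. by rewrite /= /mxi mtens0r. Qed.

Lemma dot_slide : x1 * tau - tau * x2 = 1 - C.
Proof. by apply: nbhom_inj; move: (mdot_slide K t); rewrite mtens_id -sval_x1 -sval_x2. Qed.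

Lemma dot_slide_rot : x2 * tau - tau * x1 = C - 1.
Proof. by apply: nbhom_inj; move: (mdot_slide_rot K t); rewrite -sval_x1 -sval_x2. Qed.

Lemma cap_dot : hcomp cap x2 = - hcomp cap x1.
Proof. by apply: nbhom_inj; move: (mcap_dot K t); rewrite -sval_x1 -sval_x2. Qed.

Lemma cup_dot : hcomp x1 cup = - hcomp x2 cup.
Proof. by apply: nbhom_inj; move: (mcup_dot K t); rewrite -sval_x1 -sval_x2. Qed.

Local Notation e1 := (x1 + x2).
Local Notation e2 := (x1 * x2).

Lemma e1_tau : e1 * tau = tau * e1.
Proof.
apply/eqP; rewrite -subr_eq0 mulrDl mulrDr opprD [- (tau * x1) - _]addrC addrACA.
by rewrite dot_slide dot_slide_rot addrC addrA subrK subrr.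
Qed.

Lemma e2_tau : e2 * tau - tau * e2 = x1 * C - C * x1.
Proof.
have -> : e2 * tau - tau * e2 = x1 * (x2 * tau - tau * x1) + (x1 * tau - tau * x2) * x1.
  by rewrite mulrBr mulrBl !mulrA addrA subrK -[tau * x2 * x1]mulrA (xend_comm K t 1) mulrA.
by rewrite dot_slide dot_slide_rot mulrBr mulrBl mulr1 mul1r addrA subrK.
Qed.

(* What centrality of [M = q_{r,2} 1_2] against tau, cap and cup amounts to
   when [r > 0], as then [q_{r,0} = 0]. *)
Definition central2 (M : nbend 2) :=
  [/\ M * tau = tau * M, hcomp cap M = 0 & hcomp M cup = 0].

Lemma central2_e1 : central2 e1.
Proof.
split; first exact: e1_tau.
  by rewrite linearDr /= cap_dot subrr.
by rewrite linearDl /= cup_dot addNr.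
Qed.

Lemma central2D M N : central2 M -> central2 N -> central2 (M + N).
Proof.
move=> [MT capM Mcup] [NT capN Ncup]; split.
- by rewrite mulrDl mulrDr MT NT.
- by rewrite linearDr /= capM capN addr0.
- by rewrite linearDl /= Mcup Ncup addr0.
Qed.

Lemma central2N M : central2 M -> central2 (- M).
Proof.
move=> [MT capM Mcup]; split; first by rewrite mulNr mulrN MT.
  by rewrite linearNr /= capM oppr0.
by rewrite linearNl /= Mcup oppr0.
Qed.

Lemma central2_mul_e1 M : central2 M -> central2 (e1 * M).
Proof.
move=> [MT capM Mcup]; split.
- by rewrite -mulrA MT !mulrA e1_tau.
- by rewrite mulE hcompA linearDr /= cap_dot subrr linear0l.
- by rewrite mulE -hcompA Mcup linear0r.
Qed.

Lemma central2_mul_e2 M :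
  GRing.comm M x1 -> GRing.comm M x2 -> central2 M -> central2 (e2 * M).
Proof.
move=> Mx1 Mx2 [MT capM Mcup].
have CM : C * M = 0 by rewrite mulE -hcompA capM linear0r.
split.
- apply/eqP; rewrite -subr_eq0.
  have -> : e2 * M * tau - tau * (e2 * M) = (e2 * tau - tau * e2) * M.
    by rewrite mulrBl -!mulrA MT.
  by rewrite e2_tau mulrBl -!mulrA CM -Mx1 mulrA CM mulr0 mul0r subrr.
- by rewrite -(commrM Mx1 Mx2) mulE hcompA capM linear0l.
- by rewrite mulE -hcompA Mcup linear0r.
Qed.

End TwoStrands.

Section CentralityCriterion.
Variables (K : fieldType) (t : bool) (z : nat -> forall n, nbend K t n).
Hypothesis z_x : forall r, z r 1 * (hx K t : nbend K t 1) = (hx K t : nbend K t 1) * z r 1.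
Hypothesis z_tau :
  forall r, z r 2 * (htau K t : nbend K t 2) = (htau K t : nbend K t 2) * z r 2.
Hypothesis z_cap : forall r, hcomp (z r 0) (hcap K t) = hcomp (hcap K t) (z r 2).
Hypothesis z_cup : forall r, hcomp (z r 2) (hcup K t) = hcomp (hcup K t) (z r 0).
Hypothesis z_add : forall r a b,
  z r (a + b)%N = \sum_(j < r.+1) htens (z j a) (z (r - j) b).

Lemma central_of_generators f n m : wt f n m -> forall r,
  mcomp (sval (z r m)) (\pi_(mor K t) f) = mcomp (\pi_(mor K t) f) (sval (z r n)).
Proof.
elim=> {f n m}.
- by move=> k r; rewrite mcomp1r ?mcomp1l //; exists k; exact: (svalP (z r k)).
- by move=> r; apply: (congr1 sval (z_x r)).
- by move=> r; apply: (congr1 sval (z_tau r)).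
- by move=> r; apply: (congr1 sval (z_cap r)).
- by move=> r; apply: (congr1 sval (z_cup r)).
- by move=> f g n m p _ IHg _ IHf r; rewrite pi_Comp mcompA IHf -mcompA IHg mcompA.
- move=> f g n1 m1 n2 m2 n m Wf IHf Wg IHg -> -> r.
  pose F : nbhom K t n1 m1 := exist _ (\pi_(mor K t) f) ((mwt_pi t f n1 m1).2 Wf).
  pose G : nbhom K t n2 m2 := exist _ (\pi_(mor K t) g) ((mwt_pi t g n2 m2).2 Wg).
  have zF j : hcomp (z j m1) F = hcomp F (z j n1) by apply: nbhom_inj; apply: IHf.
  have zG j : hcomp (z j m2) G = hcomp G (z j n2) by apply: nbhom_inj; apply: IHg.
  suff : hcomp (z r (m1 + m2)) (htens F G) = hcomp (htens F G) (z r (n1 + n2)).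
    by rewrite pi_Tens => /(congr1 sval).
  rewrite !z_add hcomp_suml hcomp_sumr; apply: eq_bigr => j _.
  by rewrite !hinterchange zF zG.
- move=> k l r.
  by move: (congr1 sval (hcomp0r k (z r l))) (congr1 sval (hcomp0l l (z r k))) => /= -> ->.
- by move=> f g n m _ IHf _ IHg r; rewrite pi_Add mcompDl mcompDr IHf IHg.
- by move=> c f n m _ IHf r; rewrite pi_Scal mcompZl mcompZr IHf.
Qed.

End CentralityCriterion.

Section QCentrality.
Variables (K : fieldType) (t : bool).
Local Notation q_end r n := (ev t (q_poly K r n)).

Lemma central2_q r : central2 (q_end r.+1 2).
Proof.
have ev_comm_x i p : GRing.comm (ev t p) (xend K t i) by rewrite -evXi; apply: ev_comm.
suff : central2 (q_end r.+1 2) /\ central2 (q_end r.+2 2) by case.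
elim: r => [|r [IH1 IH2]].
  have q1 : central2 (q_end 1 2).
    by rewrite q2_1 rmorphD rmorphD /= !evXi; apply: central2D; apply: central2_e1.
  split=> //; rewrite q2_rec q2_0 mulr1 subrK rmorphM rmorphD /= !evXi.
  exact: central2_mul_e1.
split=> //; rewrite q2_rec addr0 rmorphB !rmorphM rmorphD /= !evXi.
apply: central2D; first exact: central2_mul_e1.
by apply/central2N/central2_mul_e2 => //; apply: ev_comm_x.
Qed.

Lemma hx_xend : hx K t = xend K t (0 : 'I_1).
Proof. by apply: nbhom_inj; rewrite /= /mxi mtens0l mtens0r. Qed.

Lemma q_end_x r : q_end r 1 * (hx K t : nbend K t 1) = (hx K t : nbend K t 1) * q_end r 1.
Proof. by rewrite hx_xend -evXi ev_comm. Qed.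

Lemma q_end_tau r :
  q_end r 2 * (htau K t : nbend K t 2) = (htau K t : nbend K t 2) * q_end r 2.
Proof.
by case: r => [|r]; [rewrite q2_0 rmorph1 mul1r mulr1 | case: (central2_q r)].
Qed.

Lemma q_end_cap r : hcomp (q_end r 0) (hcap K t) = hcomp (hcap K t) (q_end r 2).
Proof.
case: r => [|r]; first by rewrite q2_0 q_poly0 !rmorph1 hcomp1l hcomp1r.
by case: (central2_q r) => _ -> _; rewrite q_poly0 rmorph0 hcomp0l.
Qed.

Lemma q_end_cup r : hcomp (q_end r 2) (hcup K t) = hcomp (hcup K t) (q_end r 0).
Proof.
case: r => [|r]; first by rewrite q2_0 q_poly0 !rmorph1 hcomp1l hcomp1r.
by case: (central2_q r) => _ _ ->; rewrite q_poly0 rmorph0 hcomp0r.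
Qed.

Lemma q_end_add r a b :
  q_end r (a + b)%N = \sum_(j < r.+1) htens (q_end j a) (q_end (r - j) b).
Proof.
rewrite q_poly_add rmorph_sum; apply: eq_bigr => j _.
by rewrite rmorphM /= ev_mshiftl ev_mshiftr tensl_mul_tensr.
Qed.

End QCentrality.

Theorem theorem3p8 (K : fieldType) (char_ne2 : (2%:R : K) != 0) (t : bool)
  (r n m : nat) (f : nbtm K) :
  wt f n m ->
  nb_eq t n m (Comp (poly_tm (q_poly K r m)) f) (Comp f (poly_tm (q_poly K r n))).
Proof.
move=> Wf; apply: pi_eq_nb_eq; first exact: wt_comp Wf (wt_poly_tm _ _).
rewrite !pi_Comp !pi_poly_tm.
exact: (central_of_generators (z := fun r k => ev t (q_poly K r k))
  (q_end_x K t) (q_end_tau K t) (q_end_cap K t) (q_end_cup K t) (q_end_add K t) Wf).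
Qed.
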